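(* Let $\mathbf{A}=\langle A,\wedge,\vee,\cdot,1,0,{\sim},-,'\rangle$ be a quasi relation algebra. For every positive integer $n$ and all $a,b\in A$, $${\sim}^{2n}(a\cdot b)={\sim}^{2n}a\cdot{\sim}^{2n}b\quad\text{and}\quad -^{2n}(a\cdot b)=-^{2n}a\cdot -^{2n}b.$$
   Context: An FL-algebra $\langle A,\wedge,\vee,\cdot,1,\backslash,/,0\rangle$ is a residuated lattice (a lattice $\langle A,\wedge,\vee\rangle$, a monoid $\langle A,\cdot,1\rangle$, with $a\cdot b\le c \iff a\le c/b\iff b\le a\backslash c$) together with an arbitrary constant $0$. Define ${\sim}a=a\backslash 0$, $-a=0/a$ and $a+b={\sim}(-b\cdot -a)$. It is an InFL-algebra if ${\sim}{-}a={-}{\sim}a=a$ for all $a$. A quasi relation algebra (qRA) is an InFL-algebra with a unary operation $'$ such that for all $a,b$: $a''=a$, $(a\vee b)'=a'\wedge b'$, $({\sim}a)'=-(a')$, and $(a\cdot b)'=a'+b'$. It is written in the signature $\langle A,\wedge,\vee,\cdot,1,0,{\sim},-,'\rangle$. ${\sim}^n a$ and $-^n a$ denote $n$-fold applications. *)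

From Stdlib Require Import Arith.

(* An FL-algebra: a lattice <A, meet, join>, a monoid <A, mul, one>,
   residuals ldiv (a\c) and rdiv (c/b), and an arbitrary constant zero.
   The lattice order is x <= y :<-> meet x y = x. *)
Record FLAlgebra := {
  car :> Type;
  meet : car -> car -> car;
  join : car -> car -> car;
  mul  : car -> car -> car;
  one  : car;
  ldiv : car -> car -> car;
  rdiv : car -> car -> car;
  zero : car;
  meetC : forall x y, meet x y = meet y x;
  joinC : forall x y, join x y = join y x;
  meetA : forall x y z, meet x (meet y z) = meet (meet x y) z;
  joinA : forall x y z, join x (join y z) = join (join x y) z;
  meet_join_absorb : forall x y, meet x (join x y) = x;
  join_meet_absorb : forall x y, join x (meet x y) = x;
  mulA : forall x y z, mul x (mul y z) = mul (mul x y) z;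
  mul1l : forall x, mul one x = x;
  mul1r : forall x, mul x one = x;
  resid_r : forall a b c, meet (mul a b) c = mul a b <-> meet a (rdiv c b) = a;
  resid_l : forall a b c, meet (mul a b) c = mul a b <-> meet b (ldiv a c) = b
}.

Definition le {A : FLAlgebra} (x y : A) : Prop := meet A x y = x.

(* ~a = a \ 0  and  -a = 0 / a *)
Definition tl {A : FLAlgebra} (a : A) : A := ldiv A a (zero A).
Definition ng {A : FLAlgebra} (a : A) : A := rdiv A (zero A) a.
Definition fplus {A : FLAlgebra} (a b : A) : A := tl (mul A (ng b) (ng a)).

Definition InFL (A : FLAlgebra) : Prop :=
  forall a : A, tl (ng a) = a /\ ng (tl a) = a.

Record qRA := {
  fl :> FLAlgebra;
  qinv : InFL fl;
  cmpl : fl -> fl;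
  cmpl_invol : forall a, cmpl (cmpl a) = a;
  cmpl_join : forall a b, cmpl (join fl a b) = meet fl (cmpl a) (cmpl b);
  cmpl_tl : forall a, cmpl (tl a) = ng (cmpl a);
  cmpl_mul : forall a b, cmpl (mul fl a b) = fplus (cmpl a) (cmpl b)
}.

(* The maps x |-> ~(x') and x |-> -(x') reverse products: by (ab)' = a' + b'
   and the De Morgan form a + b = -(~b . ~a) of the InFL-algebra, the first
   sends ab to ~b' . ~a' and the second to -b' . -a'.  Since (-x)' = ~(x'),
   the double negations ~~ and -- are composites of these two maps, hence
   monoid endomorphisms, and so are their iterates ~^{2n} and -^{2n}. *)
From Stdlib Require Import Arith Lia.

Section Multiplicative.
Context {T : Type} (m : T -> T -> T).

Definition multiplicative (f : T -> T) : Prop :=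
  forall x y, f (m x y) = m (f x) (f y).

Definition antimultiplicative (f : T -> T) : Prop :=
  forall x y, f (m x y) = m (f y) (f x).

Lemma antimultiplicative_comp (f g : T -> T) :
  antimultiplicative f -> antimultiplicative g ->
  multiplicative (fun x => f (g x)).
Proof. intros Hf Hg x y. rewrite Hg, Hf. reflexivity. Qed.

Lemma multiplicative_iter (f : T -> T) (n : nat) :
  multiplicative f -> multiplicative (Nat.iter n f).
Proof.
  intros Hf x y. induction n as [|n IH]; [reflexivity|].
  rewrite !Nat.iter_succ, IH. apply Hf.
Qed.

End Multiplicative.

Lemma iter_double {T : Type} (f : T -> T) (n : nat) (x : T) :
  Nat.iter (2 * n) f x = Nat.iter n (fun y => f (f y)) x.
Proof.
  induction n as [|n IH]; [reflexivity|].
  replace (2 * S n) with (S (S (2 * n))) by lia.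
  rewrite !Nat.iter_succ, IH. reflexivity.
Qed.

Section FLAlgebraOrder.
Variable A : FLAlgebra.

Lemma fl_le_refl (x : A) : le x x.
Proof.
  unfold le. pose proof (meet_join_absorb A x (meet A x x)) as E.
  rewrite join_meet_absorb in E. exact E.
Qed.

Lemma fl_le_antisym (x y : A) : le x y -> le y x -> x = y.
Proof. unfold le; intros Hxy Hyx. rewrite <- Hxy, meetC. exact Hyx. Qed.

Lemma eq_of_le_iff (x y : A) : (forall z, le z x <-> le z y) -> x = y.
Proof.
  intros E. apply fl_le_antisym; [apply E | apply E]; apply fl_le_refl.
Qed.

Lemma le_tl (c d : A) : le c (tl d) <-> le (mul A d c) (zero A).
Proof. unfold le, tl. symmetry. apply resid_l. Qed.

Lemma le_ng (c d : A) : le c (ng d) <-> le (mul A c d) (zero A).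
Proof. unfold le, ng. symmetry. apply resid_r. Qed.

Section InvolutiveNegations.
Hypothesis HA : InFL A.

Lemma tl_ng (a : A) : tl (ng a) = a.
Proof. apply HA. Qed.

Lemma ng_tl (a : A) : ng (tl a) = a.
Proof. apply HA. Qed.

Lemma le_mul_tl (c b : A) : le c b <-> le (mul A c (tl b)) (zero A).
Proof. rewrite <- le_ng, ng_tl. reflexivity. Qed.

Lemma le_ng_mul (c b : A) : le c b <-> le (mul A (ng b) c) (zero A).
Proof. rewrite <- le_tl, tl_ng. reflexivity. Qed.

Lemma fplus_ng_tl (a b : A) : fplus a b = ng (mul A (tl b) (tl a)).
Proof.
  apply eq_of_le_iff. intros z. unfold fplus.
  rewrite le_tl, <- mulA, <- le_ng_mul, le_mul_tl, <- mulA, <- le_ng_mul.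
  rewrite le_mul_tl, <- mulA, <- le_ng. reflexivity.
Qed.

End InvolutiveNegations.
End FLAlgebraOrder.

Section QuasiRelationAlgebra.
Variable A : qRA.

Lemma cmpl_ng (x : A) : cmpl A (ng x) = tl (cmpl A x).
Proof.
  pose proof (cmpl_tl A (ng x)) as E. rewrite tl_ng in E by apply qinv.
  rewrite E, tl_ng by apply qinv. reflexivity.
Qed.

Lemma tl_cmpl_antimultiplicative :
  antimultiplicative (mul A) (fun x => tl (cmpl A x)).
Proof.
  intros x y. rewrite cmpl_mul, fplus_ng_tl, tl_ng by apply qinv.
  reflexivity.
Qed.

Lemma ng_cmpl_antimultiplicative :
  antimultiplicative (mul A) (fun x => ng (cmpl A x)).
Proof.
  intros x y. rewrite cmpl_mul. unfold fplus. rewrite ng_tl by apply qinv.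
  reflexivity.
Qed.

Lemma tl_tl_multiplicative : multiplicative (mul A) (fun x => tl (tl x)).
Proof.
  intros x y.
  pose proof (antimultiplicative_comp _ _ _
    tl_cmpl_antimultiplicative ng_cmpl_antimultiplicative x y) as E.
  simpl in E. rewrite !cmpl_ng, !cmpl_invol in E. exact E.
Qed.

Lemma ng_ng_multiplicative : multiplicative (mul A) (fun x => ng (ng x)).
Proof.
  intros x y.
  pose proof (antimultiplicative_comp _ _ _
    ng_cmpl_antimultiplicative tl_cmpl_antimultiplicative x y) as E.
  simpl in E. rewrite !cmpl_tl, !cmpl_invol in E. exact E.
Qed.

End QuasiRelationAlgebra.

Theorem lemma2p3 (A : qRA) (n : nat) (a b : A) :
  0 < n ->
  Nat.iter (2 * n) (@tl A) (mul A a b) =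
    mul A (Nat.iter (2 * n) (@tl A) a) (Nat.iter (2 * n) (@tl A) b) /\
  Nat.iter (2 * n) (@ng A) (mul A a b) =
    mul A (Nat.iter (2 * n) (@ng A) a) (Nat.iter (2 * n) (@ng A) b).
Proof.
  intros _. rewrite !iter_double. split.
  - apply multiplicative_iter, tl_tl_multiplicative.
  - apply multiplicative_iter, ng_ng_multiplicative.
Qed.
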